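(* Let $\Gamma$ be a one-dimensional CW-complex and $n\ge1$. Two oriented edges $(e_1,S_1)$ and $(e_2,S_2)$ of $UC_n(\Gamma)$ are dual to the same oriented hyperplane if and only if $e_1=e_2$ and $S_1 \setminus \{ o(e_1)\}$, $S_2 \setminus \{ o(e_2) \}$ belong to the same connected component of $UC_{n-1}(\Gamma \setminus e_1)$.
   Context: $UC_n(\Gamma)$ is the cube complex whose vertices are the $n$-element subsets of the vertex set $\Gamma^{(0)}$, whose edges join $S_1,S_2$ when $S_1\triangle S_2$ is a pair of adjacent vertices, and where $n$ edges at a common vertex span an $n$-cube when the one-cells of $\Gamma$ labelling them are pairwise disjoint (no common endpoint). An oriented edge of $UC_n(\Gamma)$ is determined by a pair $(e,S)$ with $e$ an oriented edge of $\Gamma$ and $S$ an $n$-subset of vertices with $o(e)\in S$, $t(e)\notin S$; it goes from $S$ to $(S\setminus\{o(e)\})\cup\{t(e)\}$. Oriented hyperplanes are equivalence classes of oriented edges under the relation generated by being parallel (and identically oriented) opposite sides of a square. $\Gamma\setminus e$ denotes the subgraph of $\Gamma$ obtained by removing the (closed) edge $e$, i.e. its endpoints and all edges incident to them. *)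

From mathcomp Require Import all_boot.
From mathcomp Require Import finmap.
From Stdlib Require Import Relations.
Set Implicit Arguments. Unset Strict Implicit. Unset Printing Implicit Defensive.
Local Open Scope fset_scope.

(* A one-dimensional CW-complex Gamma: 0-cells of type V, 1-cells of type E,
   each 1-cell f having endpoints src f and tgt f (loops and multiple edges
   allowed; no finiteness assumed). *)
Section UC.
Variables (V : choiceType) (E : Type) (src tgt : E -> V).

Definition oedge := (E * bool)%type.
Definition o (e : oedge) : V := if e.2 then src e.1 else tgt e.1.
Definition t (e : oedge) : V := if e.2 then tgt e.1 else src e.1.

Definition disjoint_edges (a b : E) : Prop :=
  [/\ src a <> src b, src a <> tgt b, tgt a <> src b & tgt a <> tgt b].

Definition is_UC_edge (n : nat) (e : oedge) (S : {fset V}) : Prop :=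
  [/\ #|` S| = n, o e \in S & t e \notin S].

Definition move (e : oedge) (S : {fset V}) : {fset V} :=
  (S `\ o e) `|` [fset t e].

(* Elementary parallelism: (e,S) and (e, S') are opposite, identically
   oriented sides of a square of UC_n(Gamma), the square being spanned at S
   by (e,S) and (f,S) with e, f disjoint 1-cells. *)
Definition square_parallel (n : nat) (x y : oedge * {fset V}) : Prop :=
  [/\ y.1 = x.1, is_UC_edge n x.1 x.2 &
      exists f : oedge, [/\ is_UC_edge n f x.2, disjoint_edges x.1.1 f.1
                         & y.2 = move f x.2]].

Definition same_hyperplane (n : nat) (x y : oedge * {fset V}) : Prop :=
  clos_refl_sym_trans _ (square_parallel n) x y.

(* Gamma \ e (e a 1-cell): vertices that are not endpoints of e, and
   1-cells having no endpoint in common with e. *)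
Definition minus_vertex (e : E) (v : V) : Prop := v <> src e /\ v <> tgt e.
Definition minus_edge (e : E) (f : E) : Prop := disjoint_edges e f.

Definition UC_minus_step (e : E) (m : nat) (T T' : {fset V}) : Prop :=
  [/\ (forall v, v \in T -> minus_vertex e v) &
      exists f : oedge, [/\ minus_edge e f.1, is_UC_edge m f T & T' = move f T]].

Definition same_component_minus (e : E) (m : nat) (T T' : {fset V}) : Prop :=
  [/\ #|` T| = m, (forall v, v \in T -> minus_vertex e v) &
      clos_refl_sym_trans _ (UC_minus_step e m) T T'].

End UC.

From Pilot Require Import Defs.
From mathcomp Require Import all_boot.
From mathcomp Require Import finmap.
From Stdlib Require Import Relations.
Local Open Scope fset_scope.

(* The map (e, S) |-> (e, S \ {o e}) turns each square of UC_n(Gamma) witnessing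
   the parallelism of (e, S) and (e, S') into an edge of UC_(n-1)(Gamma \ e)
   from S \ {o e} to S' \ {o e}, since the other side of the square moves along
   a 1-cell disjoint from e; conversely T |-> {o e} u T turns edges of
   UC_(n-1)(Gamma \ e) back into such squares.  Hence both closures agree. *)

Lemma clos_rst_keyed_map {A B K : Type} {key : A -> K} {f : A -> B}
    {RA : relation A} {RB : K -> relation B} :
  (forall x y, RA x y -> key x = key y /\ RB (key x) (f x) (f y)) ->
  forall x y, clos_refl_sym_trans A RA x y ->
  key x = key y /\ clos_refl_sym_trans B (RB (key x)) (f x) (f y).
Proof.
move=> hom x y; elim=> {x y}
  [x y /hom [-> h] | x | x y _ [-> h] | x y z _ [kxy h1] _ [kyz h2]].
- by split=> //; apply: rst_step.
- by split=> //; apply: rst_refl.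
- by split=> //; apply: rst_sym.
- by rewrite kxy in h1 *; split; [exact: kyz | exact: rst_trans h1 h2].
Qed.

Lemma clos_rst_map {A B : Type} {f : A -> B} {RA : relation A} {RB : relation B} :
  (forall x y, RA x y -> RB (f x) (f y)) ->
  forall x y, clos_refl_sym_trans A RA x y -> clos_refl_sym_trans B RB (f x) (f y).
Proof.
move=> hom x y /(@clos_rst_keyed_map A B unit (fun=> tt) f RA (fun=> RB)) h.
by apply: (h _).2 => u v /hom.
Qed.

Section UCHyperplanes.
Variables (V : choiceType) (E : Type) (src tgt : E -> V).
Local Notation o := (o src tgt).
Local Notation t := (t src tgt).
Local Notation is_UC_edge := (is_UC_edge src tgt).
Local Notation square_parallel := (square_parallel src tgt).
Local Notation UC_minus_step := (UC_minus_step src tgt).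

Lemma disjoint_edges_endpoints {e f : oedge E} :
  disjoint_edges src tgt e.1 f.1 ->
  [/\ o e != o f, o e != t f, t e != o f & t e != t f].
Proof.
case: e f => [a []] [b []]; rewrite /Defs.o /Defs.t /= => -[h1 h2 h3 h4].
all: by split; apply/eqP => // h; subst.
Qed.

Lemma minus_vertexP (e : oedge E) (v : V) :
  minus_vertex src tgt e.1 v <-> v != o e /\ v != t e.
Proof.
case: e => a []; rewrite /minus_vertex /Defs.o /Defs.t /=.
all: by split=> -[/eqP h1 /eqP h2].
Qed.

Lemma UC_edge_not_loop {n} {e : oedge E} {S} : is_UC_edge n e S -> o e != t e.
Proof. by case=> _ ho ht; apply: contraNneq ht => <-. Qed.

Lemma card_UC_edge_base {n} {e : oedge E} {S} :
  is_UC_edge n e S -> #|` S `\ o e| = n.-1.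
Proof. by case=> <- ho _; rewrite (cardfsD1 (o e) S) ho. Qed.

Lemma UC_edge_base_minus_vertex {n} {e : oedge E} {S} :
  is_UC_edge n e S -> forall v, v \in S `\ o e -> minus_vertex src tgt e.1 v.
Proof.
case=> _ _ ht v /fsetD1P [hvo hvS]; apply/minus_vertexP; split=> //.
by apply: contraNneq ht => <-.
Qed.

Lemma square_parallel_base_step n (x y : oedge E * {fset V}) :
  square_parallel n x y ->
  x.1 = y.1 /\ UC_minus_step x.1.1 n.-1 (x.2 `\ o x.1) (y.2 `\ o y.1).
Proof.
case: x y => [e S] [_ _] [/= -> hUC [f [[hfc hfo hft] hd ->]]].
have [oe_of oe_tf _ _] := disjoint_edges_endpoints hd.
split=> //; split; first exact: UC_edge_base_minus_vertex hUC.
exists f; split=> //.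
  split; first exact: card_UC_edge_base hUC.
  - by rewrite in_fsetD1 hfo eq_sym oe_of.
  - by rewrite in_fsetD1 (negbTE hft) andbF.
apply/fsetP => v; rewrite /move !inE.
have [->|_] := eqVneq v (t f); first by rewrite !orbT andbT eq_sym oe_tf.
by rewrite !orbF andbCA.
Qed.

Lemma base_step_square_parallel n (e : oedge E) T T' :
  0 < n -> o e != t e -> UC_minus_step e.1 n.-1 T T' ->
  square_parallel n (e, o e |` T) (e, o e |` T').
Proof.
move=> n_gt0 not_loop [hT [f [hd [hc hfo hft] ->]]].
have [oe_of oe_tf _ _] := disjoint_edges_endpoints hd.
have oeT : o e \notin T by apply: contraTN isT => /hT /minus_vertexP [/eqP].
have teT : t e \notin T by apply: contraTN isT => /hT /minus_vertexP [_ /eqP].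
have cardT : #|` o e |` T| = n by rewrite cardfsU1 oeT hc add1n prednK.
split=> //=.
  by split=> //; rewrite !inE ?eqxx // negb_or teT eq_sym not_loop.
exists f; split=> //.
  by split=> //; rewrite !inE ?hfo ?orbT // negb_or hft eq_sym oe_tf.
apply/fsetP => v; rewrite /move !inE.
by have [->|_] := eqVneq v (o e); rewrite /= ?oe_of.
Qed.

Lemma same_hyperplane_base_component n (x y : oedge E * {fset V}) :
  same_hyperplane src tgt n x y ->
  x.1 = y.1 /\ clos_refl_sym_trans _ (UC_minus_step x.1.1 n.-1)
                 (x.2 `\ o x.1) (y.2 `\ o y.1).
Proof.
exact: (clos_rst_keyed_map (f := fun x => x.2 `\ o x.1)
          (RB := fun e => UC_minus_step e.1 n.-1) (@square_parallel_base_step n)).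
Qed.

Lemma base_component_same_hyperplane {n} {e : oedge E} {T T'} :
  0 < n -> o e != t e -> clos_refl_sym_trans _ (UC_minus_step e.1 n.-1) T T' ->
  same_hyperplane src tgt n (e, o e |` T) (e, o e |` T').
Proof.
move=> n_gt0 not_loop; apply: (clos_rst_map (f := fun U => (e, o e |` U))).
by move=> U U'; apply: base_step_square_parallel.
Qed.

End UCHyperplanes.

Theorem lemma3p6 (V : choiceType) (E : Type) (src tgt : E -> V) (n : nat)
  (hn : 1 <= n) (e1 e2 : oedge E) (S1 S2 : {fset V}) :
  is_UC_edge src tgt n e1 S1 -> is_UC_edge src tgt n e2 S2 ->
  (same_hyperplane src tgt n (e1, S1) (e2, S2) <->
   e1 = e2 /\
   same_component_minus src tgt e1.1 n.-1
     (S1 `\ o src tgt e1) (S2 `\ o src tgt e2)).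
Proof.
move=> hUC1 hUC2; split.
- move=> /same_hyperplane_base_component /= [<- hcomp].
  split=> //; split=> //.
  + exact: card_UC_edge_base hUC1.
  + exact: UC_edge_base_minus_vertex hUC1.
- move=> [e12 [_ _ hcomp]]; subst e2.
  have [_ ho1 _] := hUC1; have [_ ho2 _] := hUC2.
  rewrite -(fsetD1K ho1) -(fsetD1K ho2).
  apply: base_component_same_hyperplane hn _ hcomp; exact: UC_edge_not_loop hUC1.
Qed.
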